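(* Let $h,k$ be integers with $hk(h+k)\neq0$. Then for every integer $n$ with $n(n+h)(n-k)\neq 0$, $$d(n)\,d(n+h)\,d(n-k)\ \le\ d(h)\,d(k)\,d(h+k)\,d\big(n(n+h)(n-k)\big).$$
   Context: For a nonzero integer $m$, $d(m)$ denotes the number of positive divisors of $m$ (so $d(m)=d(|m|)$). *)

From mathcomp Require Import all_boot all_order all_algebra.
Set Implicit Arguments. Unset Strict Implicit. Unset Printing Implicit Defensive.
Import Order.TTheory GRing.Theory Num.Theory.

(* d(m) = number of positive divisors of |m|, for an integer m.
   (divisors 0 = [::], but d is only applied to nonzero integers.) *)
Definition ndiv (m : int) : nat := size (divisors `|m|%N).

From mathcomp Require Import all_boot all_order all_algebra.
From mathcomp Require Import zify.
Import Order.TTheory GRing.Theory Num.Theory.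
Local Open Scope ring_scope.

(* Since d(m) = \prod_p (v_p(m) + 1), it suffices to compare the p-factors of
   both sides.  Let x, y, z be the p-adic valuations of n, n + h, n - k.  The
   pairwise differences of these three numbers are h, k and h + k, so
   min(x, y) <= v_p(h), min(x, z) <= v_p(k), min(y, z) <= v_p(h + k), while
   v_p(n (n + h) (n - k)) = x + y + z.  It remains to note that
   (x+1)(y+1)(z+1) <= (min(x,y)+1)(min(x,z)+1)(min(y,z)+1)(x+y+z+1), which for
   x <= y <= z reduces to z + 1 <= (x + 1)(x + y + z + 1). *)

Lemma size_add_divisors f divs :
  size (PrimeDecompAux.add_divisors f divs) = (f.2.+1 * size divs)%N.
Proof.
case: f => p e /=; elim: e => [|e IHe] /=; first by rewrite mul1n.
by rewrite size_merge size_cat size_map IHe [in RHS]mulSn addnC.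
Qed.

Lemma size_divisors_primes n :
  size (divisors n) = (\prod_(p <- primes n) (logn p n).+1)%N.
Proof.
rewrite /divisors prime_decompE.
elim: (primes n) => [|p s IHs]; first by rewrite big_nil.
by rewrite map_cons /= (size_add_divisors (p, logn p n)) big_cons IHs.
Qed.

Lemma size_divisors_logn n N : (0 < n)%N -> (n < N)%N ->
  size (divisors n) = (\prod_(0 <= p < N) (logn p n).+1)%N.
Proof.
move=> n_gt0 lt_nN; rewrite size_divisors_primes.
have primes_iota : perm_eq (primes n) [seq p <- index_iota 0 N | p \in primes n].
  apply: uniq_perm; rewrite ?primes_uniq ?filter_uniq ?iota_uniq // => p.
  rewrite mem_filter mem_iota /= subn0; case: (boolP (p \in primes n)) => //.
  by rewrite mem_primes => /and3P[_ _ /(dvdn_leq n_gt0)/leq_ltn_trans->].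
rewrite (perm_big _ primes_iota) big_filter big_mkcond /=.
by apply: eq_bigr => p _; case: ifPn => //; rewrite -logn_gt0 lt0n negbK => /eqP->.
Qed.

Lemma minn_logn_le p m n d : (0 < m)%N -> (0 < n)%N -> (0 < d)%N ->
  (gcdn m n %| d)%N -> (minn (logn p m) (logn p n) <= logn p d)%N.
Proof. by move=> m_gt0 n_gt0 d_gt0; rewrite -logn_gcd //; apply: dvdn_leq_log. Qed.

Lemma minn_logn_le_sub p (a b c : int) :
  c = b - a -> a != 0 -> b != 0 -> c != 0 ->
  (minn (logn p `|a|) (logn p `|b|) <= logn p `|c|)%N.
Proof.
move=> -> a0 b0 ba0; apply: minn_logn_le; rewrite ?absz_gt0 //.
have : (gcdz a b %| b - a)%Z by rewrite rpredB ?dvdz_gcdl ?dvdz_gcdr.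
by rewrite dvdzE.
Qed.

Lemma leq_prodS_min (x y z : nat) :
  (x.+1 * y.+1 * z.+1
   <= (minn x y).+1 * (minn x z).+1 * (minn y z).+1 * (x + y + z).+1)%N.
Proof.
by case: (leqP x y) => xy; case: (leqP x z) => xz; case: (leqP y z) => yz; nia.
Qed.

Theorem lemma2p5 (h k : int) (hhk : h * k * (h + k) != 0) (n : int)
  (hn : n * (n + h) * (n - k) != 0) :
  (ndiv n * ndiv (n + h) * ndiv (n - k)
   <= ndiv h * ndiv k * ndiv (h + k) * ndiv (n * (n + h) * (n - k)))%N.
Proof.
move: hhk (hn); rewrite !mulf_eq0 !negb_or.
move=> /andP[/andP[h0 k0] hk0] /andP[/andP[n0 nh0] nk0].
set N := (`|n| + `|(n + h)%R| + `|(n - k)%R| + `|h| + `|k| + `|(h + k)%R|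
          + `|(n * (n + h) * (n - k))%R|)%N.+1.
rewrite /ndiv !(@size_divisors_logn _ N) ?absz_gt0 //.
all: try (rewrite /N; lia).
rewrite -!big_split /=; apply: leq_prod => p _.
rewrite !abszM !lognM ?muln_gt0 ?absz_gt0 ?n0 ?nh0 ?nk0 //.
apply: leq_trans (leq_prodS_min _ _ _) _.
rewrite -!mulnA; repeat apply: leq_mul; rewrite // ltnS.
- by apply: minn_logn_le_sub => //; lia.
- by rewrite minnC; apply: minn_logn_le_sub => //; lia.
- by rewrite minnC; apply: minn_logn_le_sub => //; lia.
Qed.
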